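(* Suppose $\beta\ge\bar\beta$. Then for every $X\in\overline\Omega_{1/6}$, $$\|\nabla h(X)\|_F\ge\frac12\big\|\mathrm{grad} f(\mathcal{P}_{\mathcal{S}_{n,p}}(X))\big\|_F+\frac\beta4\|X^\top X-I_p\|_F .$$
   Context: $f:\mathbb{R}^{n\times p}\to\mathbb{R}$ ($n\ge p$) is differentiable with $f,\nabla f$ locally Lipschitz. $\Phi(M):=\frac12(M+M^\top)$. For $Y\in\mathcal{S}_{n,p}=\{Y:Y^\top Y=I_p\}$, $\mathrm{grad} f(Y):=\nabla f(Y)-Y\Phi(Y^\top\nabla f(Y))$. $\mathcal{A}(X):=\frac32I_p-\frac12X^\top X$, $g(X):=f(X\mathcal{A}(X))$, $h(X):=g(X)+\frac\beta4\|X^\top X-I_p\|_F^2$, $G(X):=\nabla f(Y)|_{Y=X\mathcal{A}(X)}$. $\overline\Omega_r:=\{X:\|X^\top X-I_p\|_F\le r\}$; $\Omega:=\{X:\|X\|_2\le1+\frac1{12}\}$; $M_1:=\sup_{X\in\Omega}\|G(X)\|_F$; $M_2:=\sup_{X\ne Y\in\Omega}\frac{\|\nabla g(X)-\nabla g(Y)\|_F}{\|X-Y\|_F}$; $\bar\beta:=\max\{12M_1,6M_2\}$. For full-column-rank $X$ with economic SVD $X=U\Sigma V^\top$, $\mathcal{P}_{\mathcal{S}_{n,p}}(X):=UV^\top$. *)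

From HB Require Import structures.
From mathcomp Require Import all_boot all_order all_algebra.
From mathcomp Require Import boolp classical_sets reals ereal.
Set Implicit Arguments. Unset Strict Implicit. Unset Printing Implicit Defensive.
Import Order.TTheory GRing.Theory Num.Theory.
Local Open Scope ring_scope.
Local Open Scope classical_set_scope.

Section Defs.
Variable R : realType.

Definition frob_inner m k (A B : 'M[R]_(m, k)) : R :=
  \sum_(i < m) \sum_(j < k) A i j * B i j.
Definition normF m k (A : 'M[R]_(m, k)) : R := Num.sqrt (frob_inner A A).

Definition vnorm k (v : 'cV[R]_k) : R := normF v.

Definition spec_norm m k (X : 'M[R]_(m, k)) : \bar R :=
  ereal_sup [set (vnorm (X *m v))%:E | v in [set v : 'cV[R]_k | vnorm v = 1]].

Definition is_gradient m k (F : 'M[R]_(m, k) -> R) (G : 'M[R]_(m, k) -> 'M[R]_(m, k)) :=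
  forall X, forall eps : R, 0 < eps -> exists2 delta : R, 0 < delta &
    forall H, normF H < delta ->
      `| F (X + H) - F X - frob_inner (G X) H | <= eps * normF H.

Definition loc_lipschitz m k (F : 'M[R]_(m, k) -> R) :=
  forall X, exists2 r : R, 0 < r & exists L : R, forall Y Z,
    normF (Y - X) < r -> normF (Z - X) < r -> `| F Y - F Z | <= L * normF (Y - Z).
Definition loc_lipschitz_mx m k (F : 'M[R]_(m, k) -> 'M[R]_(m, k)) :=
  forall X, exists2 r : R, 0 < r & exists L : R, forall Y Z,
    normF (Y - X) < r -> normF (Z - X) < r -> normF (F Y - F Z) <= L * normF (Y - Z).

Definition symm_part k (M : 'M[R]_k) : 'M[R]_k := 2^-1 *: (M + M^T).

(* Riemannian gradient on the Stiefel manifold, given the Euclidean gradient gf *)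
Definition rgrad n p (gf : 'M[R]_(n, p) -> 'M[R]_(n, p)) (Y : 'M[R]_(n, p)) :=
  gf Y - Y *m symm_part (Y^T *m gf Y).

Definition Amap n p (X : 'M[R]_(n, p)) : 'M[R]_p := (3/2) *: 1%:M - 2^-1 *: (X^T *m X).

Definition gfun n p (f : 'M[R]_(n, p) -> R) (X : 'M[R]_(n, p)) : R := f (X *m Amap X).

Definition hfun n p (f : 'M[R]_(n, p) -> R) (beta : R) (X : 'M[R]_(n, p)) : R :=
  gfun f X + beta / 4 * normF (X^T *m X - 1%:M) ^+ 2.

Definition Gmap n p (gf : 'M[R]_(n, p) -> 'M[R]_(n, p)) (X : 'M[R]_(n, p)) := gf (X *m Amap X).

Definition OmegaBar n p (r : R) : set 'M[R]_(n, p) := [set X | normF (X^T *m X - 1%:M) <= r].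
Definition Omega n p : set 'M[R]_(n, p) := [set X | (spec_norm X <= (1 + 1/12)%:E)%E].

Definition M1 n p (gf : 'M[R]_(n, p) -> 'M[R]_(n, p)) : \bar R :=
  ereal_sup [set (normF (Gmap gf X))%:E | X in @Omega n p].

Definition M2 n p (gg : 'M[R]_(n, p) -> 'M[R]_(n, p)) : \bar R :=
  ereal_sup [set e | exists X Y, [/\ @Omega n p X, @Omega n p Y, X <> Y &
     e = (normF (gg X - gg Y) / normF (X - Y))%:E]].

Definition betabar n p gf gg : \bar R :=
  Order.max (12%:E * @M1 n p gf)%E (6%:E * @M2 n p gg)%E.

Definition is_econ_svd n p (X U : 'M[R]_(n, p)) (s : 'rV[R]_p) (V : 'M[R]_p) :=
  [/\ U^T *m U = 1%:M, V^T *m V = 1%:M, V *m V^T = 1%:M,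
      forall i, 0 < s 0 i & X = U *m diag_mx s *m V^T].

End Defs.

Arguments OmegaBar {R} n p r.
Arguments Omega {R} n p.
Arguments M1 {R} n p gf.
Arguments M2 {R} n p gg.
Arguments betabar {R} n p gf gg.

(* At a point Y of the Stiefel manifold, X |-> X A(X) is a retraction whose first-order
   part is the tangent projection, so grad g(Y) = grad f(Y) (the Riemannian gradient),
   while grad h(X) = grad g(X) + beta X (X^T X - I).  With X = U S V^T and Y = U V^T,
   X (X^T X - I) = Y W for a symmetric W, hence it is orthogonal to the tangent vector
   grad f(Y); since |s_i^2 - 1| <= 1/6, its norm is at least sqrt(5/6) |X^T X - I|.
   Pythagoras then bounds |grad g(Y) + beta X (X^T X - I)| from below, and the choice of
   beta gives |grad g(X) - grad g(Y)| <= beta/6 |X - Y| <= beta/6 |X^T X - I|. *)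

From HB Require Import structures.
From mathcomp Require Import all_boot all_order all_algebra.
From mathcomp Require Import boolp classical_sets reals ereal.
From mathcomp Require Import ring lra.
Import Order.TTheory GRing.Theory Num.Theory.
Local Open Scope ring_scope.

Set Implicit Arguments. Unset Strict Implicit. Unset Printing Implicit Defensive.

Section Frobenius.
Variable R : realType.

Lemma ler_sqr_nneg (x y : R) : 0 <= y -> x ^+ 2 <= y ^+ 2 -> x <= y.
Proof. by move=> y0 xy; rewrite leNgt; apply/negP => yx; nra. Qed.

Lemma frobE m k (A B : 'M[R]_(m, k)) : frob_inner A B = \tr (A^T *m B).
Proof.
rewrite /frob_inner /mxtrace exchange_big /=; apply: eq_bigr => i _.
by rewrite !mxE; apply: eq_bigr => j _; rewrite mxE.
Qed.

Lemma frobC m k (A B : 'M[R]_(m, k)) : frob_inner A B = frob_inner B A.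
Proof. by apply: eq_bigr => i _; apply: eq_bigr => j _; rewrite mulrC. Qed.

Lemma frobDl m k (A B C : 'M[R]_(m, k)) :
  frob_inner (A + B) C = frob_inner A C + frob_inner B C.
Proof. by rewrite !frobE linearD /= mulmxDl mxtraceD. Qed.

Lemma frobZl m k a (A C : 'M[R]_(m, k)) : frob_inner (a *: A) C = a * frob_inner A C.
Proof. by rewrite !frobE linearZ /= -scalemxAl mxtraceZ. Qed.

Lemma frobNl m k (A C : 'M[R]_(m, k)) : frob_inner (- A) C = - frob_inner A C.
Proof. by rewrite -scaleN1r frobZl mulN1r. Qed.

Lemma frobBl m k (A B C : 'M[R]_(m, k)) :
  frob_inner (A - B) C = frob_inner A C - frob_inner B C.
Proof. by rewrite frobDl frobNl. Qed.

Lemma frobDr m k (A B C : 'M[R]_(m, k)) :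
  frob_inner C (A + B) = frob_inner C A + frob_inner C B.
Proof. by rewrite frobC frobDl !(frobC C). Qed.

Lemma frobZr m k a (A C : 'M[R]_(m, k)) : frob_inner C (a *: A) = a * frob_inner C A.
Proof. by rewrite frobC frobZl frobC. Qed.

Lemma frobBr m k (A B C : 'M[R]_(m, k)) :
  frob_inner C (A - B) = frob_inner C A - frob_inner C B.
Proof. by rewrite !(frobC C) frobBl. Qed.

Lemma frob0r m k (C : 'M[R]_(m, k)) : frob_inner C 0 = 0.
Proof. by rewrite -(scale0r 0) frobZr mul0r. Qed.

Lemma frob_ge0 m k (A : 'M[R]_(m, k)) : 0 <= frob_inner A A.
Proof. by apply: sumr_ge0 => i _; apply: sumr_ge0 => j _; rewrite -expr2 sqr_ge0. Qed.

Lemma frob_eq0 m k (A : 'M[R]_(m, k)) : frob_inner A A = 0 -> A = 0.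
Proof.
move=> /eqP; rewrite psumr_eq0 => [/allP A0|i _]; last first.
  by apply: sumr_ge0 => j _; rewrite -expr2 sqr_ge0.
apply/matrixP => i j; move: (A0 i (mem_index_enum _)); rewrite psumr_eq0.
  by move=> /allP /(_ j (mem_index_enum _)); rewrite -expr2 sqrf_eq0 mxE => /eqP.
by move=> l _; rewrite -expr2 sqr_ge0.
Qed.

Lemma normF_ge0 m k (A : 'M[R]_(m, k)) : 0 <= normF A.
Proof. exact: sqrtr_ge0. Qed.

Lemma sqr_normF m k (A : 'M[R]_(m, k)) : normF A ^+ 2 = frob_inner A A.
Proof. by rewrite sqr_sqrtr // frob_ge0. Qed.

Lemma normF_eq0 m k (A : 'M[R]_(m, k)) : normF A = 0 -> A = 0.
Proof. by move=> A0; apply: frob_eq0; rewrite -sqr_normF A0 expr0n. Qed.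

Lemma normF0 m k : normF (0 : 'M[R]_(m, k)) = 0.
Proof. by rewrite /normF frob0r sqrtr0. Qed.

Lemma normFZ m k a (A : 'M[R]_(m, k)) : normF (a *: A) = `|a| * normF A.
Proof. by rewrite /normF frobZl frobZr mulrA -expr2 sqrtrM ?sqrtr_sqr // sqr_ge0. Qed.

Lemma normFN m k (A : 'M[R]_(m, k)) : normF (- A) = normF A.
Proof. by rewrite -scaleN1r normFZ normrN1 mul1r. Qed.

(* 0 <= |<B,B> A - <A,B> B|^2 = <B,B> (<A,A> <B,B> - <A,B>^2). *)
Lemma frob_CauchySchwarz m k (A B : 'M[R]_(m, k)) :
  frob_inner A B ^+ 2 <= frob_inner A A * frob_inner B B.
Proof.
have [B0|B0] := eqVneq (frob_inner B B) 0.
  by rewrite (frob_eq0 B0) !frob0r expr0n mulr0.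
have Bpos : 0 < frob_inner B B by rewrite lt_def B0 frob_ge0.
have := frob_ge0 (frob_inner B B *: A - frob_inner A B *: B).
rewrite frobBl !frobBr !frobZl !frobZr (frobC B A) => h.
rewrite -(ler_pM2l Bpos); nra.
Qed.

Lemma normr_frob_le m k (A B : 'M[R]_(m, k)) : `|frob_inner A B| <= normF A * normF B.
Proof.
apply: ler_sqr_nneg; first by rewrite mulr_ge0 ?normF_ge0.
by rewrite real_normK ?num_real // exprMn !sqr_normF frob_CauchySchwarz.
Qed.

Lemma normFD m k (A B : 'M[R]_(m, k)) : normF (A + B) <= normF A + normF B.
Proof.
apply: ler_sqr_nneg; first by rewrite addr_ge0 ?normF_ge0.
rewrite sqr_normF frobDl !frobDr sqrrD !sqr_normF (frobC B A).
have := le_trans (ler_norm _) (normr_frob_le A B); lra.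
Qed.

Lemma normF_subr_le m k (A B : 'M[R]_(m, k)) : normF A - normF B <= normF (A + B).
Proof. by have := normFD (A + B) (- B); rewrite normFN addrK; lra. Qed.

Lemma normF_add_orth m k (A B : 'M[R]_(m, k)) :
  frob_inner A B = 0 -> normF (A + B) ^+ 2 = normF A ^+ 2 + normF B ^+ 2.
Proof. by move=> AB; rewrite !sqr_normF frobDl !frobDr AB (frobC B A) AB addr0 add0r. Qed.

Lemma normF_mulmx_orthl m l k (Q : 'M[R]_(m, l)) (A : 'M[R]_(l, k)) :
  Q^T *m Q = 1%:M -> normF (Q *m A) = normF A.
Proof. by move=> QQ; rewrite /normF !frobE trmx_mul -mulmxA (mulmxA Q^T) QQ mul1mx. Qed.

Lemma normF_mulmx_orthr l k (V : 'M[R]_k) (A : 'M[R]_(l, k)) :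
  V^T *m V = 1%:M -> normF (A *m V^T) = normF A.
Proof.
move=> VV; rewrite /normF !frobE trmx_mul trmxK -mulmxA mxtrace_mulC.
by rewrite -!mulmxA VV mulmx1.
Qed.

End Frobenius.

Section FrobeniusIdentities.
Variable R : realType.

Lemma frob_mulmxl m l k (A : 'M[R]_(m, l)) (B : 'M[R]_(l, k)) (C : 'M[R]_(m, k)) :
  frob_inner (A *m B) C = frob_inner B (A^T *m C).
Proof. by rewrite !frobE trmx_mul mulmxA. Qed.

Lemma frob_tr m k (A B : 'M[R]_(m, k)) : frob_inner A^T B^T = frob_inner A B.
Proof. by rewrite !frobE trmxK -mxtrace_tr trmx_mul trmxK mxtrace_mulC. Qed.

Lemma frob_symm_part k (M N : 'M[R]_k) :
  frob_inner (symm_part M) N = frob_inner M (symm_part N).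
Proof.
rewrite /symm_part frobZl frobZr frobDl frobDr -[in frob_inner M^T N]frob_tr trmxK.
by rewrite (frobC M N^T) addrC.
Qed.

Lemma symm_part_id k (W : 'M[R]_k) : W^T = W -> symm_part W = W.
Proof. by move=> WW; rewrite /symm_part WW -mulr2n -scaler_nat scalerA mulVf ?scale1r. Qed.

Lemma frob_quadratic m k (A B C : 'M[R]_(m, k)) t :
  frob_inner (A + t *: B + t ^+ 2 *: C) (A + t *: B + t ^+ 2 *: C) =
  frob_inner A A + t * (2 * frob_inner A B) + t ^+ 2 *
    (frob_inner B B + 2 * frob_inner A C + t * (2 * frob_inner B C) + t ^+ 2 * frob_inner C C).
Proof.
rewrite !frobDl !frobDr !frobZl !frobZr (frobC B A) (frobC C A) (frobC C B); ring.
Qed.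

End FrobeniusIdentities.

Section DiagonalFrobenius.
Variable R : realType.

Lemma frob_diag p (w : 'rV[R]_p) : frob_inner (diag_mx w) (diag_mx w) = \sum_i w 0 i ^+ 2.
Proof.
apply: eq_bigr => i _; rewrite (bigD1 i) //= big1 ?addr0.
  by rewrite !mxE eqxx !mulr1n expr2.
by move=> j /negbTE ji; rewrite !mxE eq_sym ji mulr0n mulr0.
Qed.

Lemma sqr_normF_diag_mul_le p k (d : 'rV[R]_p) (A : 'M[R]_(p, k)) (c : R) :
  (forall i, d 0 i ^+ 2 <= c) -> normF (diag_mx d *m A) ^+ 2 <= c * normF A ^+ 2.
Proof.
move=> dc; rewrite !sqr_normF /frob_inner mulr_sumr; apply: ler_sum => i _.
rewrite mulr_sumr; apply: ler_sum => j _; rewrite mul_diag_mx !mxE.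
by have := dc i; have := sqr_ge0 (A i j); nra.
Qed.

Lemma sqr_normF_svd n p (U : 'M[R]_(n, p)) (V : 'M[R]_p) (w : 'rV[R]_p) :
  U^T *m U = 1%:M -> V^T *m V = 1%:M ->
  normF (U *m diag_mx w *m V^T) ^+ 2 = \sum_i w 0 i ^+ 2.
Proof.
by move=> UU VV; rewrite normF_mulmx_orthr // normF_mulmx_orthl // sqr_normF frob_diag.
Qed.

Lemma diag_mx_row1 p : diag_mx (\row_(j < p) 1) = 1%:M :> 'M[R]_p.
Proof. by rewrite -diag_const_mx; congr diag_mx; apply/matrixP => i j; rewrite !mxE. Qed.

End DiagonalFrobenius.

Lemma spec_norm_le (R : realType) m k (X : 'M[R]_(m, k)) (c : R) :
  (forall v, vnorm v = 1 -> vnorm (X *m v) <= c) -> (spec_norm X <= c%:E)%E.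
Proof. by move=> Xc; apply: ge_ereal_sup => _ [v /= v1 <-]; rewrite lee_fin Xc. Qed.

Section SingularValues.
Variable R : realType.
Variables (n p : nat) (X U : 'M[R]_(n, p)) (s : 'rV[R]_p) (V : 'M[R]_p).
Hypothesis svdX : is_econ_svd X U s V.

Let UU : U^T *m U = 1%:M. Proof. by case: svdX. Qed.
Let VV : V^T *m V = 1%:M. Proof. by case: svdX. Qed.
Let VV' : V *m V^T = 1%:M. Proof. by case: svdX. Qed.
Let s_gt0 i : 0 < s 0 i. Proof. by case: svdX. Qed.
Let Xsvd : X = U *m diag_mx s *m V^T. Proof. by case: svdX. Qed.

Lemma polar_orth : (U *m V^T)^T *m (U *m V^T) = 1%:M.
Proof. by rewrite trmx_mul trmxK -mulmxA (mulmxA U^T) UU mul1mx. Qed.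

Lemma gram_sub1_svd :
  X^T *m X - 1%:M = V *m diag_mx (\row_j (s 0 j ^+ 2 - 1)) *m V^T.
Proof.
rewrite Xsvd !trmx_mul trmxK tr_diag_mx -!mulmxA (mulmxA U^T) UU mul1mx.
rewrite (mulmxA (diag_mx s)) mulmx_diag -{1}VV' -mulmxBr -{2}(mul1mx V^T) -mulmxBl.
rewrite -diag_mx_row1 -raddfB /= mulmxA [RHS]mulmxA; congr (_ *m diag_mx _ *m _).
by apply/matrixP => i j; rewrite !mxE expr2.
Qed.

Lemma sqr_normF_gram_sub1 : normF (X^T *m X - 1%:M) ^+ 2 = \sum_i (s 0 i ^+ 2 - 1) ^+ 2.
Proof.
rewrite gram_sub1_svd normF_mulmx_orthr // normF_mulmx_orthl // sqr_normF frob_diag.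
by apply: eq_bigr => i _; rewrite mxE.
Qed.

Lemma sqr_normF_sub_polar : normF (X - U *m V^T) ^+ 2 = \sum_i (s 0 i - 1) ^+ 2.
Proof.
have -> : X - U *m V^T = U *m diag_mx (\row_j (s 0 j - 1)) *m V^T.
  rewrite Xsvd -[in U *m V^T](mulmx1 U) -mulmxBl -mulmxBr -diag_mx_row1 -raddfB /=.
  by congr (_ *m diag_mx _ *m _); apply/matrixP => i j; rewrite !mxE (ord1 i).
by rewrite (sqr_normF_svd _ UU VV); apply: eq_bigr => i _; rewrite mxE.
Qed.

Let w := \row_j (s 0 j * (s 0 j ^+ 2 - 1)).

Let mul_gram_sub1_svd : X *m (X^T *m X - 1%:M) = U *m V^T *m (V *m diag_mx w *m V^T).
Proof.
rewrite gram_sub1_svd Xsvd -!mulmxA (mulmxA V^T) VV mul1mx (mulmxA (diag_mx s)) mulmx_diag.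
rewrite (mulmxA V^T) VV mul1mx.
by congr (_ *m (_ *m _)); congr diag_mx; apply/matrixP => i j; rewrite !mxE.
Qed.

Lemma mul_gram_sub1_polar_sym :
  exists2 W : 'M[R]_p, W^T = W & X *m (X^T *m X - 1%:M) = U *m V^T *m W.
Proof.
exists (V *m diag_mx w *m V^T); last exact: mul_gram_sub1_svd.
by rewrite !trmx_mul trmxK tr_diag_mx mulmxA.
Qed.

Lemma sqr_normF_mul_gram_sub1 :
  normF (X *m (X^T *m X - 1%:M)) ^+ 2 = \sum_i (s 0 i * (s 0 i ^+ 2 - 1)) ^+ 2.
Proof.
rewrite mul_gram_sub1_svd -!mulmxA (mulmxA V^T) VV mul1mx mulmxA (sqr_normF_svd _ UU VV).
by apply: eq_bigr => i _; rewrite mxE.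
Qed.

Lemma normF_sub_polar_le : normF (X - U *m V^T) <= normF (X^T *m X - 1%:M).
Proof.
apply: ler_sqr_nneg; first exact: normF_ge0.
rewrite sqr_normF_sub_polar sqr_normF_gram_sub1; apply: ler_sum => i _.
have := s_gt0 i; set u := s 0 i => u0.
(* s^2 - 1 = (s - 1)(s + 1) with s + 1 > 1 *)
have := sqr_ge0 (u - 1); nra.
Qed.

Section NearStiefel.
Hypothesis X_near : normF (X^T *m X - 1%:M) <= 1/6.

Lemma sqr_singular_value_bounds i : 5/6 <= s 0 i ^+ 2 <= 7/6.
Proof.
have : (s 0 i ^+ 2 - 1) ^+ 2 <= normF (X^T *m X - 1%:M) ^+ 2.
  rewrite sqr_normF_gram_sub1 (bigD1 i) //= lerDl.
  by apply: sumr_ge0 => j _; apply: sqr_ge0.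
have D0 := normF_ge0 (X^T *m X - 1%:M).
have D2 : normF (X^T *m X - 1%:M) ^+ 2 <= (1/6) ^+ 2 by rewrite ler_pXn2r ?nnegrE.
set u := s 0 i ^+ 2 => u1.
by apply/andP; split; nra.
Qed.

Lemma sqr_normF_mul_gram_sub1_ge :
  5/6 * normF (X^T *m X - 1%:M) ^+ 2 <= normF (X *m (X^T *m X - 1%:M)) ^+ 2.
Proof.
rewrite sqr_normF_mul_gram_sub1 sqr_normF_gram_sub1 mulr_sumr; apply: ler_sum => i _.
case/andP: (sqr_singular_value_bounds i) => s_ge s_le.
by rewrite exprMn; have := sqr_ge0 (s 0 i ^+ 2 - 1); nra.
Qed.

Lemma Omega_near_Stiefel : Omega n p X.
Proof.
apply: spec_norm_le => v; rewrite /vnorm => v1; rewrite Xsvd -!mulmxA normF_mulmx_orthl //.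
apply: ler_sqr_nneg; first lra.
(* 7/6 = 168/144 <= (13/12)^2 *)
apply: le_trans (sqr_normF_diag_mul_le _ (c := 7/6) _) _.
  by move=> i; case/andP: (sqr_singular_value_bounds i).
by rewrite normF_mulmx_orthl ?trmxK // v1 expr1n; lra.
Qed.

End NearStiefel.

Lemma Omega_polar : Omega n p (U *m V^T).
Proof.
apply: spec_norm_le => v; rewrite /vnorm => v1; rewrite -mulmxA normF_mulmx_orthl //.
by rewrite normF_mulmx_orthl ?trmxK // v1; lra.
Qed.

End SingularValues.

Section RightDerivative.
Variable R : realType.
Implicit Types (phi psi : R -> R) (a b : R).

Definition right_deriv phi a :=
  forall eps, 0 < eps -> exists2 delta, 0 < delta &
    forall t, 0 < t < delta -> `|phi t - phi 0 - a * t| <= eps * t.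

Lemma right_deriv_unique phi a b : right_deriv phi a -> right_deriv phi b -> a = b.
Proof.
move=> da db; apply/eqP; apply: contraT => ab.
have e0 : 0 < `|a - b| / 3 by rewrite divr_gt0 // normr_gt0 subr_eq0.
have [d1 d1_gt0 near_a] := da _ e0; have [d2 d2_gt0 near_b] := db _ e0.
pose t := Num.min d1 d2 / 2.
have t0 : 0 < t by rewrite divr_gt0 // lt_min d1_gt0.
have [td1 td2] : t < d1 /\ t < d2.
  have m1 : Num.min d1 d2 <= d1 by rewrite ge_min lexx.
  have m2 : Num.min d1 d2 <= d2 by rewrite ge_min lexx orbT.
  by rewrite /t; split; lra.
have := near_a t; have := near_b t; rewrite t0 td1 td2 => /(_ isT) bt /(_ isT) at_.
have := ler_normB (phi t - phi 0 - b * t) (phi t - phi 0 - a * t).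
rewrite (_ : (phi t - phi 0 - b * t) - (phi t - phi 0 - a * t) = (a - b) * t); last by ring.
by rewrite normrM (gtr0_norm t0); nra.
Qed.

Lemma right_derivD phi psi a b : right_deriv phi a -> right_deriv psi b ->
  right_deriv (fun t => phi t + psi t) (a + b).
Proof.
move=> da db eps eps0; have e0 : 0 < eps / 2 by rewrite divr_gt0.
have [d1 d1_gt0 near_a] := da _ e0; have [d2 d2_gt0 near_b] := db _ e0.
exists (Num.min d1 d2); first by rewrite lt_min d1_gt0.
move=> t /andP[t0]; rewrite lt_min => /andP[td1 td2].
have := near_a t; have := near_b t; rewrite t0 td1 td2 => /(_ isT) bt /(_ isT) at_.
rewrite (_ : _ - _ - _ = (phi t - phi 0 - a * t) + (psi t - psi 0 - b * t)); last by ring.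
apply: le_trans (ler_normD _ _) _; lra.
Qed.

Lemma right_derivMl c phi a : right_deriv phi a -> right_deriv (fun t => c * phi t) (c * a).
Proof.
move=> da eps eps0; have c1 : 0 < `|c| + 1 by rewrite ltr_wpDl.
have [d d0 near_a] := da _ (divr_gt0 eps0 c1); exists d => // t t_d.
rewrite -mulrA -!mulrBr normrM; apply: le_trans (ler_wpM2l (normr_ge0 c) (near_a t t_d)) _.
have t0 : 0 < t by case/andP: t_d.
rewrite mulrA ler_pM2r // mulrCA ger_pMr // ler_pdivrMr //; lra.
Qed.

Lemma right_deriv_expand phi a (r : R -> R) (Q : R) :
  (forall t, 0 < t <= 1 -> phi t = phi 0 + a * t + t ^+ 2 * r t) ->
  (forall t, 0 < t <= 1 -> `|r t| <= Q) -> right_deriv phi a.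
Proof.
move=> phiE rQ eps eps0; have Q1 : 0 < `|Q| + 1 by rewrite ltr_wpDl.
exists (Num.min 1 (eps / (`|Q| + 1))); first by rewrite lt_min ltr01 divr_gt0.
move=> t /andP[t0]; rewrite lt_min => /andP[t1 te].
have t01 : 0 < t <= 1 by rewrite t0 (ltW t1).
rewrite phiE // (_ : _ - _ - _ = t ^+ 2 * r t); last by ring.
rewrite normrM normrX (gtr0_norm t0).
have := rQ t t01; have := ler_norm Q; have := normr_ge0 (r t).
move: te; rewrite ltr_pdivlMr // => te; nra.
Qed.

End RightDerivative.

Section GradientAlongCurves.
Variables (R : realType) (n p : nat).
Implicit Types (F : 'M[R]_(n, p) -> R) (G : 'M[R]_(n, p) -> 'M[R]_(n, p)).

Lemma normF_le_first_order (K A : 'M[R]_(n, p)) C t :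
  0 < t <= 1 -> normF (K - t *: A) <= t ^+ 2 * C -> normF K <= t * (normF A + `|C|).
Proof.
case/andP=> t0 t1 KA; have := normFD (t *: A) (K - t *: A).
rewrite addrC subrK normFZ gtr0_norm //.
have : t ^+ 2 * C <= t * `|C|.
  rewrite expr2 -mulrA ler_pM2l //.
  by have := ler_norm C; have := normr_ge0 C; nra.
lra.
Qed.

Lemma gradient_right_deriv F G (c : R -> 'M[R]_(n, p)) X A C :
  is_gradient F G -> c 0 = X ->
  (forall t, 0 < t <= 1 -> normF (c t - X - t *: A) <= t ^+ 2 * C) ->
  right_deriv (fun t => F (c t)) (frob_inner (G X) A).
Proof.
move=> dF c0 cA eps eps0; rewrite c0.
set M := normF A + `|C| + 1; set N := normF (G X) * `|C| + 1.
have M0 : 0 < M by rewrite /M ltr_wpDl // addr_ge0 ?normF_ge0.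
have N0 : 0 < N by rewrite /N ltr_wpDl // mulr_ge0 ?normF_ge0.
have e1 : 0 < eps / (2 * M) by rewrite divr_gt0 // mulr_gt0.
have [d d0 near_X] := dF X _ e1.
exists (Num.min (Num.min 1 (d / M)) (eps / (2 * N))).
  by rewrite !lt_min ltr01 !divr_gt0 // mulr_gt0.
move=> t /andP[t0]; rewrite !lt_min => /andP[/andP[t1 tdM] teN].
have t01 : 0 < t <= 1 by rewrite t0 (ltW t1).
have ctM : normF (c t - X) <= t * M.
  by apply: le_trans (normF_le_first_order t01 (cA t t01)) _; rewrite ler_pM2l // lerDl.
have first_order : `|F (c t) - F X - frob_inner (G X) (c t - X)| <= eps / 2 * t.
  have ctd : normF (c t - X) < d.
    by apply: le_lt_trans ctM _; rewrite -ltr_pdivlMr // mulrC.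
  have := near_X _ ctd; rewrite (addrC X) subrK => /le_trans; apply.
  apply: le_trans (ler_wpM2l (ltW e1) ctM) _.
  suff -> : eps / (2 * M) * (t * M) = eps / 2 * t by [].
  by field; rewrite gt_eqF.
have second_order : `|frob_inner (G X) (c t - X - t *: A)| <= eps / 2 * t.
  apply: le_trans (normr_frob_le _ _) _.
  have tC : t ^+ 2 * C <= t ^+ 2 * `|C| by rewrite ler_wpM2l ?sqr_ge0 ?ler_norm.
  have tN : t * (normF (G X) * `|C|) <= eps / 2.
    by move: teN; rewrite ltr_pdivlMr ?mulr_gt0 // /N; lra.
  apply: le_trans (ler_wpM2l (normF_ge0 _) (le_trans (cA t t01) tC)) _.
  rewrite (_ : normF (G X) * _ = t * (t * (normF (G X) * `|C|))); last by ring.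
  by rewrite [_ * t]mulrC ler_pM2l.
rewrite (_ : _ - _ - _ = (F (c t) - F X - frob_inner (G X) (c t - X)) +
                         frob_inner (G X) (c t - X - t *: A)); last first.
  by rewrite !frobBr frobZr; ring.
by apply: le_trans (ler_normD _ _) _; lra.
Qed.

Lemma gradient_right_deriv_line F G X E :
  is_gradient F G -> right_deriv (fun t => F (X + t *: E)) (frob_inner (G X) E).
Proof.
move=> dF; apply: (gradient_right_deriv (C := 0) dF); first by rewrite scale0r addr0.
by move=> t _; rewrite (addrC X) addrK subrr normF0 mulr0.
Qed.

Lemma gradient_eq_right_deriv F G X A : is_gradient F G ->
  (forall E, right_deriv (fun t => F (X + t *: E)) (frob_inner A E)) -> G X = A.
Proof.
move=> dF dA; apply/eqP; rewrite -subr_eq0; apply/eqP/frob_eq0.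
by rewrite frobBl (right_deriv_unique (gradient_right_deriv_line X _ dF) (dA _)) subrr.
Qed.

End GradientAlongCurves.

Section StiefelTangent.
Variables (R : realType) (n p : nat).
Implicit Types (Y E G : 'M[R]_(n, p)).

(* Tangent-space projection at Y; [rgrad gf Y] is [tproj Y (gf Y)] by definition. *)
Definition tproj Y E : 'M[R]_(n, p) := E - Y *m symm_part (Y^T *m E).

Lemma frob_tproj_sym Y G E : frob_inner G (tproj Y E) = frob_inner (tproj Y G) E.
Proof.
rewrite frobBr frobBl (frobC G (Y *m _)) !frob_mulmxl frob_symm_part.
by rewrite (frobC (symm_part _)).
Qed.

Lemma frob_tproj_normal Y G (W : 'M[R]_p) : Y^T *m Y = 1%:M -> W^T = W ->
  frob_inner (tproj Y G) (Y *m W) = 0.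
Proof.
move=> YY WW; rewrite frobC frob_mulmxl mulmxBr mulmxA YY mul1mx frobBr.
by rewrite (frobC _ (symm_part _)) frob_symm_part symm_part_id // frobC subrr.
Qed.

End StiefelTangent.

Section Gradients.
Variables (R : realType) (n p : nat).
Implicit Types (X Y E : 'M[R]_(n, p)).

Lemma gram_add_scale X E t : (X + t *: E)^T *m (X + t *: E) =
  X^T *m X + t *: (X^T *m E + E^T *m X) + t ^+ 2 *: (E^T *m E).
Proof.
rewrite [(_ + _)^T]linearD /= [(_ *: _)^T]linearZ /= mulmxDl !mulmxDr -!scalemxAl -!scalemxAr.
by apply/matrixP => i j; rewrite !mxE; ring.
Qed.

Lemma retraction_expand Y E : Y^T *m Y = 1%:M ->
  exists B C : 'M[R]_(n, p), forall t,
    (Y + t *: E) *m Amap (Y + t *: E) - Y - t *: tproj Y E = t ^+ 2 *: (B + t *: C).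
Proof.
move=> YY; set P := Y^T *m E + E^T *m Y.
exists (- 2^-1 *: (E *m P + Y *m (E^T *m E))), (- 2^-1 *: (E *m (E^T *m E))) => t.
rewrite /Amap gram_add_scale YY /tproj /symm_part trmx_mul trmxK -/P.
do 3 (rewrite ?(mulmxDr, mulmxDl, mulmxN, mulNmx, mulmx1, mul1mx); rewrite -?scalemxAl -?scalemxAr).
by apply/matrixP => i j; rewrite !mxE; field.
Qed.

Lemma gfun_gradient_Stiefel (f : 'M[R]_(n, p) -> R) gf gg Y :
  is_gradient f gf -> is_gradient (gfun f) gg -> Y^T *m Y = 1%:M -> gg Y = rgrad gf Y.
Proof.
move=> df dg YY; apply: (gradient_eq_right_deriv dg) => E.
have [B [C BC]] := retraction_expand E YY.
rewrite -frob_tproj_sym; apply: (gradient_right_deriv (C := normF B + normF C) df).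
  have := BC 0; rewrite expr0n /= !scale0r !addr0 subr0 => /eqP.
  by rewrite subr_eq0 => /eqP.
move=> t /andP[t0 t1]; have t_ge0 := ltW t0.
rewrite BC normFZ ger0_norm ?exprn_ge0 // ler_pM2l ?exprn_gt0 //.
apply: le_trans (normFD _ _) _.
by rewrite lerD2l normFZ ger0_norm // ler_piMl ?normF_ge0.
Qed.

Lemma right_deriv_penalty X E :
  right_deriv (fun t => normF ((X + t *: E)^T *m (X + t *: E) - 1%:M) ^+ 2)
    (4 * frob_inner (X *m (X^T *m X - 1%:M)) E).
Proof.
set D := X^T *m X - 1%:M; set P := X^T *m E + E^T *m X; set Q := E^T *m E.
set c2 := frob_inner P P + 2 * frob_inner D Q; set c3 := 2 * frob_inner P Q.
apply: (right_deriv_expand (r := fun t => c2 + t * c3 + t ^+ 2 * frob_inner Q Q)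
                           (Q := `|c2| + `|c3| + `|frob_inner Q Q|)).
  move=> t _; rewrite !gram_add_scale scale0r addr0 expr0n /= scale0r addr0 -/D.
  rewrite (_ : _ - 1%:M = D + t *: P + t ^+ 2 *: Q); last first.
    by rewrite /D /P /Q; apply/matrixP => i j; rewrite !mxE; ring.
  have DP : frob_inner D P = 2 * frob_inner (X *m D) E.
    have DD : D^T = D by rewrite /D raddfB /= trmx_mul trmxK tr_scalar_mx.
    rewrite /P frobDr -[frob_inner D (E^T *m X)]frob_tr DD trmx_mul trmxK.
    by rewrite (frobC D) frob_mulmxl trmxK (frobC E); ring.
  by rewrite !sqr_normF frob_quadratic DP /c2 /c3; ring.
move=> t /andP[t0 t1]; have t_ge0 := ltW t0.
apply: le_trans (ler_normD _ _) _; rewrite lerD //; last first.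
  by rewrite normrM normrX ger0_norm // ler_piMl // exprn_ile1.
apply: le_trans (ler_normD _ _) _; rewrite lerD2l.
by rewrite normrM ger0_norm // ler_piMl.
Qed.

Lemma hfun_gradient (f : 'M[R]_(n, p) -> R) gg gh beta X :
  is_gradient (gfun f) gg -> is_gradient (hfun f beta) gh ->
  gh X = gg X + beta *: (X *m (X^T *m X - 1%:M)).
Proof.
move=> dg dh; apply: (gradient_eq_right_deriv dh) => E.
rewrite frobDl frobZl (_ : beta * _ = beta / 4 * (4 * frob_inner (X *m (X^T *m X - 1%:M)) E)).
  exact: right_derivD (gradient_right_deriv_line X E dg) (right_derivMl _ (right_deriv_penalty X E)).
by field.
Qed.

End Gradients.

Section PenaltyConstants.
Variables (R : realType) (n p : nat).
Implicit Types (gf gg : 'M[R]_(n, p) -> 'M[R]_(n, p)) (X Y : 'M[R]_(n, p)).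

Lemma M1_ge0 gf X : Omega n p X -> (0 <= M1 n p gf)%E.
Proof.
move=> OX; apply: le_trans (ereal_sup_ubound _) => /=; last by exists X.
by rewrite lee_fin normF_ge0.
Qed.

Lemma beta_ge0 gf X (beta : R) :
  Omega n p X -> (12%:E * M1 n p gf <= beta%:E)%E -> 0 <= beta.
Proof.
move=> OX hb; rewrite -lee_fin; apply: le_trans hb.
by apply: mule_ge0 => //; apply: M1_ge0 OX.
Qed.

Lemma M2_lipschitz gg X Y (beta : R) : Omega n p X -> Omega n p Y ->
  (6%:E * M2 n p gg <= beta%:E)%E -> normF (gg X - gg Y) <= beta / 6 * normF (X - Y).
Proof.
move=> OX OY hb; have [->|XY] := eqVneq X Y; first by rewrite !subrr normF0 mulr0.
have XY0 : 0 < normF (X - Y).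
  rewrite lt_def normF_ge0 andbT; apply: contra XY => /eqP /normF_eq0 /eqP.
  by rewrite subr_eq0.
have : ((normF (gg X - gg Y) / normF (X - Y))%:E <= M2 n p gg)%E.
  by apply: ereal_sup_ubound; exists X, Y; split => //; apply/eqP.
have six0 : (0 <= 6%:E :> \bar R)%E by rewrite lee_fin.
move=> /(lee_wpmul2l six0) /le_trans /(_ hb).
by rewrite -EFinM lee_fin -ler_pdivrMr //; lra.
Qed.

End PenaltyConstants.

Lemma normF_add_orth_ge (R : realType) m k (A B : 'M[R]_(m, k)) (u : R) :
  frob_inner A B = 0 -> 0 <= u -> 5/6 * u ^+ 2 <= normF B ^+ 2 ->
  1/2 * normF A + 5/12 * u <= normF (A + B).
Proof.
move=> AB u0 Bu; apply: ler_sqr_nneg; first exact: normF_ge0.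
rewrite normF_add_orth //; have := sqr_ge0 (normF A - 5/18 * u); nra.
Qed.

Unset Implicit Arguments.

Theorem mainTheorem17 (R : realType) (n p : nat) (hnp : (p <= n)%N)
  (f : 'M[R]_(n, p) -> R) (gf : 'M[R]_(n, p) -> 'M[R]_(n, p))
  (gg gh : 'M[R]_(n, p) -> 'M[R]_(n, p)) (beta : R) :
  is_gradient f gf -> loc_lipschitz f -> loc_lipschitz_mx gf ->
  is_gradient (gfun f) gg ->
  is_gradient (hfun f beta) gh ->
  (betabar n p gf gg <= beta%:E)%E ->
  forall X : 'M[R]_(n, p), OmegaBar n p (1/6) X ->
  forall (U : 'M[R]_(n, p)) (s : 'rV[R]_p) (V : 'M[R]_p), is_econ_svd X U s V ->
  normF (gh X) >= 1/2 * normF (rgrad gf (U *m V^T)) + beta / 4 * normF (X^T *m X - 1%:M).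
Proof.
move=> df _ _ dg dh; rewrite /betabar ge_max => /andP[hM1 hM2] X X_near U s V svdX.
set Y := U *m V^T; set D := X^T *m X - 1%:M.
have YY : Y^T *m Y = 1%:M := polar_orth svdX.
have OX := Omega_near_Stiefel svdX X_near.
have beta0 : 0 <= beta := beta_ge0 OX hM1.
have lip := M2_lipschitz OX (Omega_polar svdX) hM2.
have ghX : gh X = (rgrad gf Y + beta *: (X *m D)) + (gg X - gg Y).
  by rewrite (hfun_gradient _ dg dh) -(gfun_gradient_Stiefel df dg YY) [RHS]addrC [RHS]addrA subrK.
have [W WW XD] := mul_gram_sub1_polar_sym svdX.
have orth : frob_inner (rgrad gf Y) (beta *: (X *m D)) = 0.
  by rewrite frobZr XD (frob_tproj_normal (gf Y) YY WW) mulr0.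
have lower := normF_add_orth_ge orth (mulr_ge0 beta0 (normF_ge0 D)).
have := normF_subr_le (rgrad gf Y + beta *: (X *m D)) (gg X - gg Y); rewrite -ghX.
have := ler_wpM2l beta0 (normF_sub_polar_le svdX).
have := normF_ge0 D; have := normF_ge0 (X - Y).
suff : 5/6 * (beta * normF D) ^+ 2 <= normF (beta *: (X *m D)) ^+ 2 by move/lower; nra.
rewrite normFZ ger0_norm // !exprMn mulrCA.
by apply: ler_wpM2l; [exact: sqr_ge0 | exact: sqr_normF_mul_gram_sub1_ge svdX X_near].
Qed.
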